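(* Let $\mathcal P$ and $\mathrm{conv}(\mathcal P)$ be as in the context. Let $\alpha,\beta,s_{\max}$ be integers such that (a) $L\le s_{\max}\le\min\{T-2,\lfloor(\overline C-\overline V)/V\rfloor\}$, (b) $0\le\alpha<\beta\le s_{\max}$, and (c) $\beta=\alpha+1$ or $s_{\max}\le L+\alpha$. Let $\mathcal S=[0,\alpha]_{\mathbb Z}\cup[\beta,s_{\max}]_{\mathbb Z}$. For any $t\in[s_{\max}+2,T]_{\mathbb Z}$, the inequality $$x_t\le\overline C y_t-\sum_{s\in\mathcal S}(\overline C-\overline V-sV)(y_{t-s}-y_{t-s-1})$$ is valid and facet-defining for $\mathrm{conv}(\mathcal P)$. For any $t\in[1,T-s_{\max}-1]_{\mathbb Z}$, the inequality $$x_t\le\overline C y_t-\sum_{s\in\mathcal S}(\overline C-\overline V-sV)(y_{t+s}-y_{t+s+1})$$ is valid and facet-defining for $\mathrm{conv}(\mathcal P)$.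
   Context: For integers $a,b$, $[a,b]_{\mathbb Z}=\{a,a+1,\dots,b\}$ if $a\le b$ and $\emptyset$ otherwise. Fix a positive integer $T$, positive integers $L$ (minimum up time) and $\ell$ (minimum down time), and reals $\overline C,\underline C,V,\overline V$ with $\overline C>\underline C>0$, $V>0$, $\overline V+V\le\overline C$ and $\underline C<\overline V<\underline C+V$. $\mathcal P$ is the set of $(\mathbf x,\mathbf y)=((x_1,\dots,x_T),(y_1,\dots,y_T))\in\mathbb R_+^T\times\{0,1\}^T$ satisfying: (i) $-y_{t-1}+y_t-y_k\le 0$ for all $t\in[2,T]_{\mathbb Z}$, $k\in[t,\min\{T,t+L-1\}]_{\mathbb Z}$; (ii) $y_{t-1}-y_t+y_k\le 1$ for all $t\in[2,T]_{\mathbb Z}$, $k\in[t,\min\{T,t+\ell-1\}]_{\mathbb Z}$; (iii) $-x_t+\underline C y_t\le 0$ and $x_t-\overline C y_t\le 0$ for all $t\in[1,T]_{\mathbb Z}$; (iv) $x_t-x_{t-1}\le Vy_{t-1}+\overline V(1-y_{t-1})$ for all $t\in[2,T]_{\mathbb Z}$; (v) $x_{t-1}-x_t\le Vy_t+\overline V(1-y_t)$ for all $t\in[2,T]_{\mathbb Z}$. $\mathrm{conv}(\mathcal P)\subseteq\mathbb R^{2T}$ is its convex hull. A linear inequality is valid for $\mathrm{conv}(\mathcal P)$ if all its points satisfy it, and facet-defining if moreover the set of points of $\mathrm{conv}(\mathcal P)$ satisfying it with equality has dimension $\dim\mathrm{conv}(\mathcal P)-1$. *)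

From mathcomp Require Import all_boot all_order all_algebra.
From mathcomp Require Import reals.
Set Implicit Arguments. Unset Strict Implicit. Unset Printing Implicit Defensive.
Import Order.TTheory GRing.Theory Num.Theory.
Local Open Scope ring_scope.

(* A point (x, y) of R^T x R^T, stored as two T-tuples.
   Coordinates are indexed 1..T as in the paper: X p t = x_t, Y p t = y_t. *)
Definition point (R : realType) (T : nat) := (T.-tuple R * T.-tuple R)%type.

Definition X (R : realType) (T : nat) (p : point R T) (t : nat) : R :=
  nth 0 (tval p.1) t.-1.
Definition Y (R : realType) (T : nat) (p : point R T) (t : nat) : R :=
  nth 0 (tval p.2) t.-1.

Definition inP (R : realType) (T L l : nat) (Cb Cl V Vb : R) (p : point R T) : Prop :=
  (forall t, (1 <= t <= T)%N -> 0 <= X p t) /\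
  (forall t, (1 <= t <= T)%N -> Y p t = 0 \/ Y p t = 1) /\
  (forall t k, (2 <= t <= T)%N -> (t <= k <= minn T (t + L - 1))%N ->
      - Y p t.-1 + Y p t - Y p k <= 0) /\
  (forall t k, (2 <= t <= T)%N -> (t <= k <= minn T (t + l - 1))%N ->
      Y p t.-1 - Y p t + Y p k <= 1) /\
  (forall t, (1 <= t <= T)%N -> - X p t + Cl * Y p t <= 0 /\ X p t - Cb * Y p t <= 0) /\
  (forall t, (2 <= t <= T)%N ->
      X p t - X p t.-1 <= V * Y p t.-1 + Vb * (1 - Y p t.-1)) /\
  (forall t, (2 <= t <= T)%N ->
      X p t.-1 - X p t <= V * Y p t + Vb * (1 - Y p t)).

Definition conv (R : realType) (T : nat) (S : point R T -> Prop) (p : point R T) : Prop :=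
  exists (k : nat) (q : 'I_k -> point R T) (lam : 'I_k -> R),
    (forall i, S (q i)) /\ (forall i, 0 <= lam i) /\ \sum_(i < k) lam i = 1 /\
    (forall t, (1 <= t <= T)%N ->
       X p t = \sum_(i < k) lam i * X (q i) t /\
       Y p t = \sum_(i < k) lam i * Y (q i) t).

Definition aff_indep (R : realType) (T : nat) (k : nat) (q : 'I_k -> point R T) : Prop :=
  forall lam : 'I_k -> R,
    \sum_(i < k) lam i = 0 ->
    (forall t, (1 <= t <= T)%N ->
       \sum_(i < k) lam i * X (q i) t = 0 /\ \sum_(i < k) lam i * Y (q i) t = 0) ->
    forall i, lam i = 0.

(* max_aff S k : the maximum number of affinely independent points of S is k,
   i.e. dim S = k - 1 (with dim of the empty set = -1). *)
Definition max_aff (R : realType) (T : nat) (S : point R T -> Prop) (k : nat) : Prop :=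
  (exists q : 'I_k -> point R T, (forall i, S (q i)) /\ aff_indep q) /\
  (forall q : 'I_k.+1 -> point R T, (forall i, S (q i)) -> ~ aff_indep q).

Definition valid_ineq (R : realType) (T : nat) (K : point R T -> Prop)
  (lhs rhs : point R T -> R) : Prop :=
  forall p, K p -> lhs p <= rhs p.

(* Valid and facet-defining: the face where equality holds has dimension dim K - 1. *)
Definition facet_defining (R : realType) (T : nat) (K : point R T -> Prop)
  (lhs rhs : point R T -> R) : Prop :=
  valid_ineq K lhs rhs /\
  exists k : nat, max_aff K k.+1 /\ max_aff (fun p => K p /\ lhs p = rhs p) k.

(* Let W_k be the part of the sum with s >= k, and c_s = Cb - Vb - s V
   its coefficients, which are nonnegative and decreasing.  Going back from t one
   shows W_k <= c_k y_(t-k); in the gap between alpha and beta this uses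
   condition (c): there a shutdown is preceded by a run reaching back beyond
   t - smax - 1, so the rest of the sum vanishes.  If the unit is on at t and
   started up k <= smax periods before, ramping caps x_t at Vb + k V = Cb - c_k,
   while the sum is at most its start-up term c_k plus the nonpositive W_(k+1).
   Facet.  conv P is full-dimensional, and the inequality is tight at 2T affinely
   independent schedules (always on at full output; on with a dip of V at a time
   other than t; for every m in [2, T + 1] one schedule switching at m, either a
   start-up ramping as fast as the inequality allows or a shutdown) and strict at
   the dip at t.  The second family of inequalities is the time reversal of the
   first, and P is invariant under time reversal. *)

From mathcomp Require Import all_boot all_order all_algebra.
From mathcomp Require Import reals.
From mathcomp Require Import zify ring lra.
Set Implicit Arguments. Unset Strict Implicit. Unset Printing Implicit Defensive.
Import Order.TTheory GRing.Theory Num.Theory.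
Local Open Scope ring_scope.

Section AffineGeometry.
Variables (R : realType) (T : nat).
Implicit Types (p : point R T) (f g : point R T -> R).

Definition is_affine f : Prop :=
  forall k (lam : 'I_k -> R) (q : 'I_k -> point R T) p,
    \sum_i lam i = 1 ->
    (forall u, (1 <= u <= T)%N ->
       X p u = \sum_i lam i * X (q i) u /\ Y p u = \sum_i lam i * Y (q i) u) ->
    f p = \sum_i lam i * f (q i).

Lemma is_affine_X u : (1 <= u <= T)%N -> is_affine (fun p => X p u).
Proof. by move=> hu k lam q p _ /(_ u hu) []. Qed.

Lemma is_affine_Y u : (1 <= u <= T)%N -> is_affine (fun p => Y p u).
Proof. by move=> hu k lam q p _ /(_ u hu) []. Qed.

Lemma is_affine_cst (c : R) : is_affine (fun=> c).
Proof. by move=> k lam q p hs _; rewrite -mulr_suml hs mul1r. Qed.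

Lemma is_affineZ (c : R) f : is_affine f -> is_affine (fun p => c * f p).
Proof.
move=> hf k lam q p hs hc.
by rewrite (hf _ _ _ _ hs hc) mulr_sumr; under eq_bigr do rewrite mulrCA.
Qed.

Lemma is_affineB f g : is_affine f -> is_affine g -> is_affine (fun p => f p - g p).
Proof.
move=> hf hg k lam q p hs hc.
rewrite (hf _ _ _ _ hs hc) (hg _ _ _ _ hs hc) -sumrB.
by apply: eq_bigr => i _; rewrite mulrBr.
Qed.

Lemma is_affine_sum (F : nat -> point R T -> R) (P : pred nat) n :
  (forall s, (s < n)%N -> is_affine (F s)) ->
  is_affine (fun p => \sum_(0 <= s < n | P s) F s p).
Proof.
move=> hF k lam q p hs hc; rewrite big_nat_cond.
rewrite (eq_bigr (fun s => \sum_i lam i * F s (q i))); last first.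
  by move=> s /andP[/andP[_ hsn] _]; apply: hF.
rewrite -big_nat_cond exchange_big /=; apply: eq_bigr => i _.
by rewrite mulr_sumr.
Qed.

Lemma is_affine_dep f k (lam : 'I_k -> R) (q : 'I_k -> point R T) :
  is_affine f -> \sum_i lam i = 0 ->
  (forall u, (1 <= u <= T)%N ->
     \sum_i lam i * X (q i) u = 0 /\ \sum_i lam i * Y (q i) u = 0) ->
  \sum_i lam i * f (q i) = 0.
Proof.
case: k lam q => [|k] lam q hf hs hc; first by rewrite big_ord0.
(* Shifting the dependence by the first point turns it into an affine combination. *)
pose mu i := lam i + (i == ord0)%:R.
have mu_sum (G : 'I_k.+1 -> R) : \sum_i mu i * G i = \sum_i lam i * G i + G ord0.
  under eq_bigr do rewrite mulrDl; rewrite big_split /=; congr (_ + _).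
  rewrite (bigD1 ord0) //= mul1r big1 ?addr0 // => i /negbTE ->.
  by rewrite mul0r.
have e : f (q ord0) = \sum_i lam i * f (q i) + f (q ord0).
  rewrite -mu_sum; apply: hf => [|u hu].
    by have := mu_sum (fun=> 1); rewrite -!big_distrl /= hs !mulr1 add0r.
  by have [hx hy] := hc u hu; rewrite !mu_sum hx hy !add0r.
by apply: (addIr (f (q ord0))); rewrite add0r -e.
Qed.

Lemma aff_indep_le k (q : 'I_k -> point R T) : aff_indep q -> (k <= (T + T).+1)%N.
Proof.
move=> hind; rewrite leqNgt; apply/negP => hk.
pose A := \matrix_(i < k, j < (T + T).+1)
  (if j == 0 :> nat then 1 else if (j <= T)%N then X (q i) j else Y (q i) (j - T)).
have : kermx A != 0.
  rewrite kermx_eq0 /row_free; apply/negP => /eqP hr.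
  by have := rank_leq_col A; rewrite hr; lia.
case/matrix0Pn => i0 [j0 hne].
have col (c : 'I_(T + T).+1) : \sum_j kermx A i0 j * A j c = 0.
  have : row i0 (kermx A) *m A = 0 by rewrite -row_mul mulmx_ker row0.
  move/(congr1 (fun M : 'M_(1, _) => M 0 c)); rewrite !mxE => h.
  by apply: etrans h; apply: eq_bigr => j _; rewrite [in RHS]mxE.
move: hne; rewrite (hind (fun j => kermx A i0 j)) ?eqxx //.
- by have := col ord0; rewrite /A; under eq_bigr do rewrite mxE /= mulr1.
- move=> u hu; split.
  + have hu' : (u < (T + T).+1)%N by lia.
    have := col (Ordinal hu'); rewrite /A; under eq_bigr do rewrite mxE /=.
    have -> : (u == 0)%N = false by lia.
    by have -> : (u <= T)%N by lia.
  + have hu' : (u + T < (T + T).+1)%N by lia.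
    have := col (Ordinal hu'); rewrite /A; under eq_bigr do rewrite mxE /=.
    have -> : (u + T == 0)%N = false by lia.
    have -> : (u + T <= T)%N = false by lia.
    by rewrite addnK.
Qed.

Lemma aff_indep_eq k (q q' : 'I_k -> point R T) :
  (forall i, q i = q' i) -> aff_indep q -> aff_indep q'.
Proof.
move=> e hind lam hs hc; apply: hind => // u hu; have [hx hy] := hc u hu.
by split; [apply: etrans hx | apply: etrans hy]; apply: eq_bigr => i _; rewrite e.
Qed.

Lemma aff_indep_extend f (F : nat -> point R T) k :
  is_affine f -> (forall i, (i < k)%N -> f (F i) = 0) -> f (F k) != 0 ->
  aff_indep (fun i : 'I_k => F i) -> aff_indep (fun i : 'I_k.+1 => F i).
Proof.
move=> hf h0 hk hind lam hs hc.
have lam_max : lam ord_max = 0.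
  have := is_affine_dep hf hs hc; rewrite big_ord_recr /= big1 ?add0r.
    by move/eqP; rewrite mulf_eq0 (negbTE hk) orbF => /eqP.
  by move=> i _; rewrite h0 ?mulr0.
have lam_widen := hind (fun i => lam (widen_ord (leqnSn k) i)).
move=> i; case: (ltnP i k) => hi.
  have -> : i = widen_ord (leqnSn k) (Ordinal hi) by apply: val_inj.
  apply: lam_widen.
    by move: hs; rewrite big_ord_recr /= lam_max addr0.
  move=> u hu; have [hx hy] := hc u hu.
  by move: hx hy; rewrite !big_ord_recr /= lam_max !mul0r !addr0.
by have -> : i = ord_max by apply/val_inj/eqP; rewrite eqn_leq hi -ltnS ltn_ord.
Qed.

Lemma aff_indep_triangular (F : nat -> point R T) (f : nat -> point R T -> R) k :
  (forall i, (i < k)%N -> is_affine (f i)) ->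
  (forall i, (i < k)%N -> f i (F i) != 0) ->
  (forall i j, (j < i < k)%N -> f i (F j) = 0) ->
  aff_indep (fun i : 'I_k => F i).
Proof.
elim: k => [|k IH] haff hnz hlow; first by move=> lam _ _ [].
apply: (aff_indep_extend (f := f k)) => //.
- by apply: haff.
- by move=> i hi; apply: hlow; rewrite hi /=.
- by apply: hnz.
apply: IH => [i hi|i hi|i j /andP[hji hi]].
- by apply: haff; apply: ltnW.
- by apply: hnz; apply: ltnW.
- by apply: hlow; rewrite hji /= ltnW.
Qed.

Lemma in_conv (S : point R T -> Prop) p : S p -> conv S p.
Proof.
move=> hp; exists 1%N, (fun=> p), (fun=> 1); do 3!split => //.
- by rewrite big_ord1.
- by move=> u _; rewrite !big_ord1 !mul1r.
Qed.

Lemma conv_ge0 (S : point R T -> Prop) f p :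
  is_affine f -> (forall q, S q -> 0 <= f q) -> conv S p -> 0 <= f p.
Proof.
move=> hf hS [k [q [lam [hq [hl [hs hc]]]]]].
rewrite (hf _ _ _ _ hs hc); apply: sumr_ge0 => i _.
by apply: mulr_ge0; [apply: hl | apply: hS].
Qed.

Lemma facet_criterion (S : point R T -> Prop) (lhs rhs : point R T -> R)
    (F : nat -> point R T) p0 :
  is_affine (fun p => rhs p - lhs p) ->
  (forall p, S p -> lhs p <= rhs p) ->
  (forall i, (i < T + T)%N -> S (F i) /\ lhs (F i) = rhs (F i)) ->
  aff_indep (fun i : 'I_(T + T) => F i) ->
  S p0 -> lhs p0 != rhs p0 ->
  facet_defining (conv S) lhs rhs.
Proof.
move=> hf hval htight hind hS0 hne.
have hp0 : rhs p0 - lhs p0 != 0 by rewrite subr_eq0 eq_sym.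
split.
  move=> p hp; rewrite -subr_ge0; apply: (conv_ge0 hf) hp => q hq.
  by rewrite subr_ge0; apply: hval.
exists (T + T); split; split.
- pose G i := if (i < T + T)%N then F i else p0.
  exists (fun i : 'I_(T + T).+1 => G i); split.
    by move=> i; apply: in_conv; rewrite /G; case: ifP => // hi; have [] := htight i hi.
  apply: (aff_indep_extend hf).
  + by move=> i hi; rewrite /G hi; have [_ ->] := htight i hi; rewrite subrr.
  + by rewrite /G ltnn.
  + by apply: aff_indep_eq hind => i; rewrite /G ltn_ord.
- by move=> q _ /aff_indep_le; rewrite ltnn.
- exists (fun i : 'I_(T + T) => F i); split => // i.
  by have [hS ->] := htight i (ltn_ord i); split => //; apply: in_conv.
- move=> q hq hindq.
  pose G i := if (i < (T + T).+1)%N then q (inord i) else p0.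
  suff /aff_indep_le : aff_indep (fun i : 'I_(T + T).+2 => G i) by rewrite ltnn.
  apply: (aff_indep_extend hf).
  + by move=> i hi; rewrite /G hi; have [_ ->] := hq (inord i); rewrite subrr.
  + by rewrite /G ltnn.
  + by apply: aff_indep_eq hindq => i; rewrite /G ltn_ord inord_val.
Qed.

End AffineGeometry.

Section MinimumUpTime.
Variables (R : realType) (T L : nat).

(* Constraint (i) of [inP] is [min_up (Y p)]; constraint (ii) is the same
   condition, with [l] for [L], on [1 - Y p]. *)
Definition min_up (y : nat -> R) : Prop :=
  forall t k, (2 <= t <= T)%N -> (t <= k <= minn T (t + L - 1))%N ->
    - y t.-1 + y t - y k <= 0.

Definition binary (y : nat -> R) : Prop :=
  forall u, (1 <= u <= T)%N -> y u = 0 \/ y u = 1.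

Lemma min_up_before_shutdown (y : nat -> R) tau j :
  binary y -> min_up y -> (tau < T)%N -> y tau = 1 -> y tau.+1 = 0 ->
  (1 <= j <= tau)%N -> (tau < j + L)%N -> y j = 1.
Proof.
move=> hbin hup htau h1 h0 hj hjL.
suff run d : (d <= tau - j)%N -> y (tau - d)%N = 1.
  by have := run _ (leqnn _); have -> : (tau - (tau - j) = j)%N by lia.
elim: d => [|d IH] hd; first by rewrite subn0.
have hon := IH (ltnW hd).
case: (hbin (tau - d.+1)%N ltac:(lia)) => // hoff.
have := hup (tau - d)%N tau.+1 ltac:(lia) ltac:(lia).
have -> : (tau - d).-1 = (tau - d.+1)%N by lia.
by rewrite hoff hon h0; lra.
Qed.

Lemma min_up_rev (y y' : nat -> R) :
  binary y -> (forall u, (1 <= u <= T)%N -> y' u = y (T.+1 - u)%N) ->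
  min_up y -> min_up y'.
Proof.
move=> hbin hy' hup t k ht hk; rewrite !hy'; try lia.
case: (hbin (T.+1 - t.-1)%N ltac:(lia)) => e1;
case: (hbin (T.+1 - t)%N ltac:(lia)) => e2;
case: (hbin (T.+1 - k)%N ltac:(lia)) => e3; rewrite e1 e2 e3; try lra.
have e1' : y (T.+1 - t).+1 = 0 by rewrite -e1; congr y; lia.
have := min_up_before_shutdown hbin hup (j := (T.+1 - k)%N) _ e2 e1'.
by rewrite e3 => /(_ ltac:(lia) ltac:(lia) ltac:(lia)); lra.
Qed.

End MinimumUpTime.

Section FeasiblePoints.
Variables (R : realType) (T L l : nat) (Cb Cl V Vb : R) (p : point R T).
Hypothesis hp : inP L l Cb Cl V Vb p.

Lemma inP_binary : binary T (Y p).
Proof. by case: hp => _ []. Qed.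

Lemma inP_min_up : min_up T L (Y p).
Proof. by case: hp => _ [_ []]. Qed.

Lemma inP_X_bounds u : (1 <= u <= T)%N -> 0 <= X p u /\ X p u <= Cb * Y p u.
Proof.
case: hp => hx [_ [_ [_ [hcap _]]]] hu; have [_ h] := hcap u hu.
by split; [apply: hx | lra].
Qed.

Lemma ramp_up_le tau n :
  (2 <= tau)%N -> (tau + n <= T)%N -> Y p tau.-1 = 0 ->
  (forall i, (i < n)%N -> Y p (tau + i) = 1) -> X p (tau + n) <= Vb + n%:R * V.
Proof.
move=> htau hn hoff; case: hp => _ [_ [_ [_ [hcap [hramp_up _]]]]].
elim: n hn => [|n IH] hn hon.
  have [_ hx] := hcap tau.-1 ltac:(lia); have := hramp_up tau ltac:(lia).
  by rewrite addn0 hoff in hx *; lra.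
have := hramp_up (tau + n.+1)%N ltac:(lia).
rewrite -addn1 addnA addn1 /= hon // natrD mulrDl mul1r.
by have := IH ltac:(lia) (fun i hi => hon i (ltnW hi)); lra.
Qed.

End FeasiblePoints.

Section TimeReversal.
Variables (R : realType) (T : nat).
Implicit Types (p : point R T).

Definition rev_pt p : point R T := (rev_tuple p.1, rev_tuple p.2).

Lemma rev_ptK : involutive rev_pt.
Proof. by case=> a b; congr pair; apply: val_inj; rewrite /= revK. Qed.

Lemma X_rev p u : (1 <= u <= T)%N -> X (rev_pt p) u = X p (T.+1 - u)%N.
Proof. by move=> hu; rewrite /X /= nth_rev size_tuple; [congr nth; lia | lia]. Qed.

Lemma Y_rev p u : (1 <= u <= T)%N -> Y (rev_pt p) u = Y p (T.+1 - u)%N.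
Proof. by move=> hu; rewrite /Y /= nth_rev size_tuple; [congr nth; lia | lia]. Qed.

Lemma inP_rev L l (Cb Cl V Vb : R) p :
  inP L l Cb Cl V Vb p -> inP L l Cb Cl V Vb (rev_pt p).
Proof.
case=> hx [hy [hup [hdown [hcap [hramp_up hramp_down]]]]].
split; [|split; [|split; [|split; [|split; [|split]]]]].
- by move=> u hu; rewrite X_rev //; apply: hx; lia.
- by move=> u hu; rewrite Y_rev //; apply: hy; lia.
- by apply: (min_up_rev (y' := Y (rev_pt p)) hy _ hup) => u; apply: Y_rev.
- have hbin' : binary T (fun u => 1 - Y p u).
    by move=> u /hy [] ->; [right | left]; rewrite ?subr0 ?subrr.
  have : min_up T l (fun u => 1 - Y (rev_pt p) u).
    apply: min_up_rev hbin' _ _ => [u hu|t k ht hk]; first by rewrite Y_rev.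
    by have := hdown t k ht hk; lra.
  by move=> h t k ht hk; have := h t k ht hk; lra.
- by move=> u hu; rewrite X_rev // Y_rev //; apply: hcap; lia.
- move=> u hu; rewrite !X_rev ?Y_rev; try lia.
  have -> : (T.+1 - u.-1 = T.+2 - u)%N by lia.
  have -> : (T.+1 - u = (T.+2 - u).-1)%N by lia.
  by apply: hramp_down; lia.
- move=> u hu; rewrite !X_rev ?Y_rev; try lia.
  have -> : (T.+1 - u.-1 = T.+2 - u)%N by lia.
  have -> : (T.+1 - u = (T.+2 - u).-1)%N by lia.
  by apply: hramp_up; lia.
Qed.

Lemma conv_rev (S : point R T -> Prop) p :
  (forall q, S q -> S (rev_pt q)) -> conv S p -> conv S (rev_pt p).
Proof.
move=> hS [k [q [lam [hq [hl [hs hc]]]]]].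
exists k, (fun i => rev_pt (q i)), lam; split; first by move=> i; apply: hS.
split=> //; split=> // u hu.
rewrite X_rev // Y_rev //; have [-> ->] := hc (T.+1 - u)%N ltac:(lia).
by split; apply: eq_bigr => i _; rewrite ?X_rev ?Y_rev.
Qed.

Lemma aff_indep_rev k (q : 'I_k -> point R T) :
  aff_indep q -> aff_indep (fun i => rev_pt (q i)).
Proof.
move=> hind lam hs hc; apply: hind => // u hu.
have [hx hy] := hc (T.+1 - u)%N ltac:(lia).
split; [apply: etrans hx | apply: etrans hy]; apply: eq_bigr => i _;
  by rewrite ?X_rev ?Y_rev ?subKn //; lia.
Qed.

Lemma max_aff_rev (S S' : point R T -> Prop) k :
  (forall p, S' p <-> S (rev_pt p)) -> max_aff S k -> max_aff S' k.
Proof.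
move=> hS [[q [hq hind]] hmax]; split.
  exists (fun i => rev_pt (q i)); split; last exact: aff_indep_rev.
  by move=> i; apply/hS; rewrite rev_ptK.
by move=> q' hq' /aff_indep_rev; apply: hmax => i; apply/hS.
Qed.

Lemma facet_defining_rev (K : point R T -> Prop) (lhs rhs lhs' rhs' : point R T -> R) :
  (forall p, K p -> K (rev_pt p)) ->
  (forall p, lhs' p = lhs (rev_pt p)) -> (forall p, rhs' p = rhs (rev_pt p)) ->
  facet_defining K lhs rhs -> facet_defining K lhs' rhs'.
Proof.
move=> hK hl hr [hval [k [hfull hface]]].
have hKrev p : K p <-> K (rev_pt p) by split => [/hK //|/hK]; rewrite rev_ptK.
split; first by move=> p hp; rewrite hl hr; apply/hval/hK.
exists k; split; first exact: max_aff_rev hfull.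
by apply: max_aff_rev hface => p; rewrite hl hr hKrev.
Qed.

End TimeReversal.

Section TestPoints.
Variables (R : realType) (T : nat) (Cb Cl V Vb : R).

Definition point_of (fx fy : nat -> R) : point R T :=
  ([tuple of map fx (iota 1 T)], [tuple of map fy (iota 1 T)]).

Lemma X_point_of fx fy u : (1 <= u <= T)%N -> X (point_of fx fy) u = fx u.
Proof.
move=> hu; rewrite /X /= (nth_map 0%N) ?size_iota ?nth_iota; try lia.
by congr fx; lia.
Qed.

Lemma Y_point_of fx fy u : (1 <= u <= T)%N -> Y (point_of fx fy) u = fy u.
Proof.
move=> hu; rewrite /Y /= (nth_map 0%N) ?size_iota ?nth_iota; try lia.
by congr fy; lia.
Qed.

Definition full : point R T := point_of (fun=> Cb) (fun=> 1).

Definition dip (j : nat) : point R T :=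
  point_of (fun u => if u == j then Cb - V else Cb) (fun=> 1).

Definition startup (m r : nat) : point R T :=
  point_of (fun u => if (m <= u)%N then Vb + (minn (u - m) r)%:R * V else 0)
           (fun u => ((m <= u)%N)%:R).

Definition shutdown (m r : nat) : point R T := rev_pt (startup (T.+2 - m) r).

Lemma X_startup m r u : (1 <= u <= T)%N ->
  X (startup m r) u = if (m <= u)%N then Vb + (minn (u - m) r)%:R * V else 0.
Proof. exact: X_point_of. Qed.

Lemma Y_startup m r u : (1 <= u <= T)%N -> Y (startup m r) u = ((m <= u)%N)%:R.
Proof. exact: Y_point_of. Qed.

Lemma Y_shutdown m r u : (1 <= u <= T)%N -> Y (shutdown m r) u = ((u < m)%N)%:R.
Proof.
move=> hu; rewrite Y_rev // Y_point_of; last lia.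
by have -> : (T.+2 - m <= T.+1 - u)%N = (u < m)%N by apply/idP/idP; lia.
Qed.

Lemma X_shutdown_off m r u : (1 <= u <= T)%N -> (m <= u)%N -> X (shutdown m r) u = 0.
Proof.
move=> hu hmu; rewrite X_rev // X_point_of; last lia.
by case: ifP => //; lia.
Qed.

Variables (L l : nat).

Lemma on_inP fx : 0 <= Cl ->
  (forall u, (1 <= u <= T)%N -> Cl <= fx u <= Cb) ->
  (forall u, (2 <= u <= T)%N -> fx u - fx u.-1 <= V /\ fx u.-1 - fx u <= V) ->
  inP L l Cb Cl V Vb (point_of fx (fun=> 1)).
Proof.
move=> hCl hbd hstep.
have XE u : (1 <= u <= T)%N -> X (point_of fx (fun=> 1)) u = fx u by apply: X_point_of.
have YE u : (1 <= u <= T)%N -> Y (point_of fx (fun=> 1)) u = 1 by apply: Y_point_of.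
split; [|split; [|split; [|split; [|split; [|split]]]]].
- by move=> u hu; rewrite XE //; have /andP[h1 h2] := hbd u hu; lra.
- by move=> u hu; rewrite YE //; right.
- by move=> t k ht hk; rewrite !YE; try lia; lra.
- by move=> t k ht hk; rewrite !YE; try lia; lra.
- by move=> u hu; rewrite XE ?YE //; have /andP[h1 h2] := hbd u hu; lra.
- by move=> u hu; rewrite !XE ?YE; try lia; have [h1 h2] := hstep u hu; lra.
- by move=> u hu; rewrite !XE ?YE; try lia; have [h1 h2] := hstep u hu; lra.
Qed.

Lemma full_inP : 0 <= Cl -> 0 <= V -> Cl <= Cb -> inP L l Cb Cl V Vb full.
Proof. by move=> hCl hV hCb; apply: on_inP => // [u _|u _]; first apply/andP; lra. Qed.

Lemma dip_inP j : 0 <= Cl -> 0 <= V -> Cl + V <= Cb -> inP L l Cb Cl V Vb (dip j).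
Proof.
move=> hCl hV hCb; apply: on_inP => // [u _|u hu]; first by apply/andP; case: ifP; lra.
by case: ifP => _; case: ifP => _; lra.
Qed.

Lemma startup_inP m r : 0 <= Cl -> Cl <= Vb -> 0 <= V -> Vb + r%:R * V <= Cb ->
  inP L l Cb Cl V Vb (startup m r).
Proof.
move=> hCl hClVb hV hr.
have XE := X_startup m r; have YE := Y_startup m r.
have ramp_ge0 a : 0 <= a%:R * V by rewrite mulr_ge0.
have ramp_le a b : (a <= b)%N -> a%:R * V <= b%:R * V by move=> ?; rewrite ler_wpM2r ?ler_nat.
have ramp_step a : (minn a.+1 r)%:R * V <= (minn a r)%:R * V + V.
  by rewrite -[X in _ + X]mul1r -mulrDl natr1 ramp_le //; lia.
split; [|split; [|split; [|split; [|split; [|split]]]]].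
- by move=> u hu; rewrite XE //; case: ifP => _; [have := ramp_ge0 (minn (u - m) r) |]; lra.
- by move=> u hu; rewrite YE //; case: (m <= u)%N; [right | left].
- move=> u k hu hk; rewrite !YE; try lia.
  by case: (leqP m u.-1) => ?; case: (leqP m u) => ?; case: (leqP m k) => ? //=; lra || lia.
- move=> u k hu hk; rewrite !YE; try lia.
  by case: (leqP m u.-1) => ?; case: (leqP m u) => ?; case: (leqP m k) => ? //=; lra || lia.
- move=> u hu; rewrite XE ?YE //; case: ifP => _ /=; last lra.
  have := ramp_le (minn (u - m) r) r (geq_minr _ _).
  have := ramp_ge0 (minn (u - m) r); lra.
- move=> u hu; rewrite !XE ?YE; try lia.
  have := ramp_ge0 (minn (u.-1 - m) r).
  case: (leqP m u.-1) => h1; case: (leqP m u) => h2 /=; try lia; try lra.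
    have := ramp_step (u.-1 - m)%N.
    have -> : ((u.-1 - m).+1 = u - m)%N by lia.
    lra.
  have -> : (u - m = 0)%N by lia.
  by rewrite min0n mul0r; lra.
- move=> u hu; rewrite !XE ?YE; try lia.
  have := ramp_ge0 (minn (u - m) r).
  case: (leqP m u.-1) => h1; case: (leqP m u) => h2 /=; try lia; try lra.
  by have := ramp_le (minn (u.-1 - m) r) (minn (u - m) r) ltac:(lia); lra.
Qed.

Lemma shutdown_inP m r : 0 <= Cl -> Cl <= Vb -> 0 <= V -> Vb + r%:R * V <= Cb ->
  inP L l Cb Cl V Vb (shutdown m r).
Proof. by move=> *; apply/inP_rev/startup_inP. Qed.

End TestPoints.

Definition ramp_rhs (R : realType) (T : nat) (Cb V Vb : R) (S : pred nat) (smax t : nat)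
    (p : point R T) : R :=
  Cb * Y p t -
  \sum_(0 <= s < smax.+1 | S s) (Cb - Vb - s%:R * V) * (Y p (t - s) - Y p (t - s - 1)).

Section Validity.
Variables (R : realType) (T L l : nat) (Cb Cl V Vb : R) (S : pred nat) (smax t : nat).
Variable p : point R T.
Hypotheses (hV : 0 <= V) (hsmax : smax%:R * V <= Cb - Vb).
Hypothesis gap_short : forall k, (k <= smax)%N -> ~~ S k -> (smax < k + L)%N.
Hypothesis ht : (smax + 2 <= t <= T)%N.
Hypothesis hp : inP L l Cb Cl V Vb p.

Local Notation coef s := (Cb - Vb - s%:R * V).

Definition ramp_tail (k : nat) : R :=
  \sum_(k <= s < smax.+1 | S s) coef s * (Y p (t - s) - Y p (t - s - 1)).

Lemma ramp_coef_ge0 s : (s <= smax)%N -> 0 <= coef s.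
Proof.
move=> hs; have : s%:R * V <= smax%:R * V by rewrite ler_wpM2r ?ler_nat.
by move: hsmax; lra.
Qed.

Lemma ramp_coef_succ_le s : coef s.+1 <= coef s.
Proof. by move: hV; rewrite -addn1 natrD mulrDl mul1r; lra. Qed.

Lemma ramp_tail_rec k : (k <= smax)%N ->
  ramp_tail k = (if S k then coef k * (Y p (t - k) - Y p (t - k - 1)) else 0) + ramp_tail k.+1.
Proof. by move=> hk; rewrite /ramp_tail big_ltn_cond //; case: ifP; rewrite ?add0r. Qed.

Lemma ramp_tail_end : ramp_tail smax.+1 = 0.
Proof. by rewrite /ramp_tail big_geq. Qed.

(* After a shutdown at [t - k] with [k] outside [S], minimum up time keeps the
   unit on back to [t - smax - 1], so no later term contributes. *)
Lemma ramp_tail_gap k : (k <= smax)%N -> ~~ S k ->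
  Y p (t - k) = 0 -> Y p (t - k - 1) = 1 -> ramp_tail k.+1 = 0.
Proof.
move=> hk hS h0 h1; have hL := gap_short hk hS.
have on j : (k < j <= smax.+1)%N -> Y p (t - j) = 1.
  move=> hj; apply: (min_up_before_shutdown (inP_binary hp) (inP_min_up hp)
    (tau := (t - k - 1)%N)) => //; try lia.
  by have -> : (t - k - 1).+1 = (t - k)%N by lia.
rewrite /ramp_tail big_nat_cond big1 // => s /andP[/andP[hs1 hs2] _].
have -> : (t - s - 1 = t - s.+1)%N by lia.
by rewrite !on ?subrr ?mulr0 //; lia.
Qed.

Lemma ramp_tail_step_le k : (k <= smax)%N ->
  ramp_tail k.+1 <= coef k * Y p (t - k - 1) -> ramp_tail k <= coef k * Y p (t - k).
Proof.
move=> hk hW; rewrite ramp_tail_rec //; have hc := ramp_coef_ge0 hk.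
have hbin := inP_binary hp.
case: (hbin (t - k)%N ltac:(lia)) => e0;
case: (hbin (t - k - 1)%N ltac:(lia)) => e1; rewrite e0 e1 in hW *.
- by case: ifP; lra.
- case: ifP => hS; first lra.
  by rewrite ramp_tail_gap ?hS //; lra.
- by case: ifP; lra.
- by case: ifP; lra.
Qed.

Lemma ramp_tail_le k : (k <= smax)%N -> ramp_tail k <= coef k * Y p (t - k).
Proof.
have hbin := inP_binary hp.
move=> hk; rewrite -(subKn hk); elim: (smax - k)%N (leq_subr k smax) => [|n IH] hn.
  apply: ramp_tail_step_le; rewrite subn0 // ramp_tail_end.
  apply: mulr_ge0; first exact: ramp_coef_ge0.
  by case: (hbin (t - smax - 1)%N ltac:(lia)) => ->.
apply: ramp_tail_step_le; first lia.
have -> : (smax - n.+1).+1 = (smax - n)%N by lia.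
apply: le_trans (IH (ltnW hn)) _.
have -> : (t - (smax - n) = t - (smax - n.+1) - 1)%N by lia.
have -> : (smax - n = (smax - n.+1).+1)%N by lia.
have := ramp_coef_succ_le (smax - n.+1)%N.
by case: (hbin (t - (smax - n.+1) - 1)%N ltac:(lia)) => ->; lra.
Qed.

Lemma ramp_tail_le0 k : (k <= smax.+1)%N -> Y p (t - k) = 0 -> ramp_tail k <= 0.
Proof.
case: (ltnP k smax.+1) => hk hk' h0; first by have := ramp_tail_le hk; rewrite h0 mulr0.
have -> : k = smax.+1 by lia.
by rewrite ramp_tail_end.
Qed.

Lemma X_add_ramp_tail_le k : (k <= smax.+1)%N ->
  (forall j, (j <= k)%N -> Y p (t - j) = 1) -> X p t + ramp_tail k <= Cb.
Proof.
have [_ hcap] : 0 <= X p t /\ X p t <= Cb * Y p t by apply: (inP_X_bounds hp); lia.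
have hbin := inP_binary hp.
move=> hk; rewrite -(subKn hk); elim: (smax.+1 - k)%N (leq_subr k smax.+1) => [|n IH] hn hon.
  rewrite subn0 ramp_tail_end addr0.
  by have := hon 0%N isT; rewrite subn0 => e; rewrite e in hcap; lra.
set k' := (smax.+1 - n.+1)%N in hon *.
have hk' : (k' <= smax)%N by lia.
rewrite ramp_tail_rec //.
case: (hbin (t - k' - 1)%N ltac:(lia)) => e1.
  (* the unit started up at [t - k'] *)
  have hx : X p (t - k' + k') <= Vb + k'%:R * V.
    apply: (ramp_up_le hp); try lia.
      by rewrite -e1; congr Y; lia.
    by move=> i hi; rewrite -(hon (k' - i)%N) ?leq_subr //; congr Y; lia.
  have e : (t - k' + k' = t)%N by lia.
  rewrite e in hx.
  have hW : ramp_tail k'.+1 <= 0.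
    by apply: ramp_tail_le0; [lia | rewrite -e1; congr Y; lia].
  by have := ramp_coef_ge0 hk'; rewrite hon // e1; case: ifP => _; lra.
rewrite hon // e1 subrr mulr0 if_same add0r.
have -> : k'.+1 = (smax.+1 - n)%N by lia.
apply: IH; first lia.
move=> j hj; case: (leqP j k') => hjk; first exact: hon.
by rewrite -e1; congr Y; lia.
Qed.

Lemma ramp_ineq_valid : X p t <= ramp_rhs Cb V Vb S smax t p.
Proof.
have [hx hcap] : 0 <= X p t /\ X p t <= Cb * Y p t by apply: (inP_X_bounds hp); lia.
rewrite /ramp_rhs -/(ramp_tail 0%N).
have hbin := inP_binary hp.
case: (hbin t ltac:(lia)) => ht0.
  have := ramp_tail_le0 (k := 0%N) isT; rewrite subn0 => /(_ ht0).
  by rewrite ht0 in hcap *; lra.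
have hon j : (j <= 0)%N -> Y p (t - j) = 1 by rewrite leqn0 => /eqP ->; rewrite subn0.
by have := X_add_ramp_tail_le (k := 0%N) isT hon; rewrite ht0; lra.
Qed.

End Validity.

Section Facet.
Variables (R : realType) (T L l : nat) (Cb Cl V Vb : R) (S : pred nat) (smax t : nat).
Hypotheses (hV : 0 < V) (hCl : 0 <= Cl) (hClVb : Cl <= Vb) (hVbV : Vb + V <= Cb).
Hypothesis hsmax : smax%:R * V <= Cb - Vb.
Hypothesis gap_short : forall k, (k <= smax)%N -> ~~ S k -> (smax < k + L)%N.
Hypothesis ht : (smax + 2 <= t <= T)%N.

Local Notation rhs := (ramp_rhs Cb V Vb S smax t).
Local Notation ramp_sum p :=
  (\sum_(0 <= s < smax.+1 | S s) (Cb - Vb - s%:R * V) * (Y p (t - s) - Y p (t - s - 1))).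

Lemma ramp_rhs_affine : is_affine (fun p : point R T => rhs p - X p t).
Proof.
apply: is_affineB; last by apply: is_affine_X; lia.
apply: is_affineB; first by apply/is_affineZ/is_affine_Y; lia.
apply: is_affine_sum => s hs; apply/is_affineZ/is_affineB; apply: is_affine_Y; lia.
Qed.

Lemma ramp_sum_const (p : point R T) a :
  (forall u, (1 <= u <= t)%N -> Y p u = a) -> ramp_sum p = 0.
Proof.
move=> hY; rewrite big_nat_cond big1 // => s /andP[/andP[_ hs] _].
by rewrite !hY ?subrr ?mulr0 //; lia.
Qed.

Lemma ramp_sum_step (p : point R T) m a b : (1 <= m <= t)%N ->
  (forall u, (1 <= u <= T)%N -> Y p u = a + b * ((m <= u)%N)%:R) ->
  ramp_sum p =
    if S (t - m)%N && (t - m <= smax)%N then b * (Cb - Vb - (t - m)%N%:R * V) else 0.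
Proof.
move=> hm hY.
have -> : ramp_sum p = \sum_(0 <= s < smax.+1 | S s && (s == (t - m)%N))
    (Cb - Vb - s%:R * V) * (Y p (t - s) - Y p (t - s - 1)).
  rewrite big_mkcondr [LHS]big_nat_cond [RHS]big_nat_cond.
  apply: eq_bigr => s /andP[/andP[_ hs] _]; case: eqP => // /eqP hne.
  rewrite !hY; try lia.
  have -> : (m <= t - s - 1)%N = (m <= t - s)%N by apply/idP/idP; lia.
  by rewrite subrr mulr0.
rewrite big_nat1_cond_eq /= andbC ltnS; case: ifP => // /andP[_ hle].
rewrite !hY; try lia.
have -> : (m <= t - (t - m))%N = true by lia.
have -> : (m <= t - (t - m) - 1)%N = false by lia.
by rewrite /=; ring.
Qed.

Lemma on_tight (fx : nat -> R) :
  fx t = Cb -> X (point_of T fx (fun=> 1)) t = rhs (point_of T fx (fun=> 1)).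
Proof.
move=> hfx; rewrite /ramp_rhs (ramp_sum_const (a := 1)) => [|u hu]; last first.
  by rewrite Y_point_of //; lia.
by rewrite X_point_of ?Y_point_of //; try lia; rewrite hfx mulr1 subr0.
Qed.

Definition switch_point (m : nat) : point R T :=
  if (t < m)%N then startup T V Vb m 0
  else if S (t - m)%N && (t - m <= smax)%N then startup T V Vb m (t - m)
  else shutdown T V Vb m 0.

Lemma switch_point_inP m : inP L l Cb Cl V Vb (switch_point m).
Proof.
have hV0 := ltW hV.
have hr0 : Vb + 0%:R * V <= Cb by rewrite mul0r addr0; move: hV hVbV; lra.
rewrite /switch_point; case: ifP => _; [|case: ifP => [/andP[_ hle]|_]].
- exact: startup_inP.
- apply: startup_inP => //.
  have : (t - m)%N%:R * V <= smax%:R * V by rewrite ler_wpM2r ?ler_nat.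
  by move: hsmax; lra.
- exact: shutdown_inP.
Qed.

Lemma Y_switch_point m : exists a b : R, b != 0 /\
  forall u, (1 <= u <= T)%N -> Y (switch_point m) u = a + b * ((m <= u)%N)%:R.
Proof.
rewrite /switch_point; case: ifP => _; [|case: ifP => _].
- by exists 0, 1; split => [|u hu]; rewrite ?oner_neq0 // Y_startup // add0r mul1r.
- by exists 0, 1; split => [|u hu]; rewrite ?oner_neq0 // Y_startup // add0r mul1r.
- exists 1, (-1); split => [|u hu]; first by rewrite oppr_eq0 oner_neq0.
  by rewrite Y_shutdown //; case: leqP => /=; rewrite ?mulr0 ?addr0 ?mulr1 ?subrr.
Qed.

Lemma switch_point_tight m : (2 <= m)%N -> X (switch_point m) t = rhs (switch_point m).
Proof.
move=> hm; rewrite /switch_point /ramp_rhs; case: ifP => htm; [|case: ifP => hS].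
- rewrite (ramp_sum_const (a := 0)) => [|u hu]; last first.
    by rewrite Y_startup; [have -> : (m <= u)%N = false by lia | lia].
  rewrite X_startup ?Y_startup; try lia.
  have -> : (m <= t)%N = false by lia.
  by rewrite /= mulr0 subr0.
- have hY u : (1 <= u <= T)%N ->
      Y (startup T V Vb m (t - m)) u = 0 + 1 * ((m <= u)%N)%:R.
    by move=> hu; rewrite Y_startup // add0r mul1r.
  rewrite (ramp_sum_step _ hY) ?hS ?X_startup ?Y_startup; try lia.
  have -> : (m <= t)%N = true by lia.
  by rewrite minnn /=; ring.
- have hY u : (1 <= u <= T)%N ->
      Y (shutdown T V Vb m 0) u = 1 + -1 * ((m <= u)%N)%:R.
    move=> hu; rewrite Y_shutdown //.
    by case: leqP => /=; rewrite ?mulr0 ?addr0 ?mulr1 ?subrr.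
  rewrite (ramp_sum_step _ hY) ?hS ?X_shutdown_off ?Y_shutdown; try lia.
  have -> : (t < m)%N = false by lia.
  by rewrite /= mulr0 subr0.
Qed.

Lemma switch_point_last u : (1 <= u <= T)%N -> Y (switch_point T.+1) u = 0.
Proof.
move=> hu; rewrite /switch_point ifT; last lia.
by rewrite Y_startup //; have -> : (T.+1 <= u)%N = false by lia.
Qed.

(* Index 0 is the always-on point, 0 < i < T the dip at the i-th time other than
   [t], and T <= i < 2T the point switching at m = 2T + 1 - i; in this order
   [face_form i] vanishes at every earlier point but not at [face_point i]. *)
Definition face_point (i : nat) : point R T :=
  if i == 0%N then full T Cb
  else if (i < T)%N then dip T Cb V (bump t i)
  else switch_point ((T + T).+1 - i).

Lemma face_point_Y_on j u : (j < T)%N -> (1 <= u <= T)%N -> Y (face_point j) u = 1.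
Proof. by move=> hj hu; rewrite /face_point hj; case: ifP => _; rewrite Y_point_of. Qed.

Lemma face_point_X_on j u : (j < T)%N -> (1 <= u <= T)%N -> u != bump t j ->
  X (face_point j) u = Cb.
Proof.
move=> hj hu hne; rewrite /face_point hj; case: ifP => _; rewrite X_point_of //.
by rewrite (negbTE hne).
Qed.

Lemma face_point_switch j : (T <= j)%N -> face_point j = switch_point ((T + T).+1 - j).
Proof. by move=> hj; rewrite /face_point ltnNge hj; case: eqP => // j0; lia. Qed.

Lemma face_point_tight i : (i < T + T)%N ->
  inP L l Cb Cl V Vb (face_point i) /\ X (face_point i) t = rhs (face_point i).
Proof.
have hV0 := ltW hV.
have hClV : Cl + V <= Cb by move: hClVb hVbV; lra.
move=> hi; rewrite /face_point; case: ifP => _; [|case: ifP => _].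
- split; last exact: on_tight.
  by apply: full_inP => //; move: hClV hV; lra.
- split; [exact: dip_inP | apply: on_tight].
  by rewrite (negbTE (neq_bump t i)).
- by split; [apply: switch_point_inP | apply: switch_point_tight; lia].
Qed.

Definition face_form (i : nat) : point R T -> R :=
  if i == 0%N then fun=> 1
  else if (i < T)%N then fun p => X p (bump t i) - Cb
  else if i == T then fun p => 1 - Y p T
  else fun p => Y p ((T + T).+1 - i).-1 - Y p ((T + T).+1 - i).

Lemma bump_range i : (1 <= i < T)%N -> (1 <= bump t i <= T)%N.
Proof. by rewrite /bump; case: leqP; lia. Qed.

Lemma face_form_affine i : (i < T + T)%N -> is_affine (face_form i).
Proof.
move=> hi; rewrite /face_form; case: ifP => [_|/negbT i0]; first exact: is_affine_cst.
case: ifP => hiT.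
  by apply: is_affineB (is_affine_cst _); apply/is_affine_X/bump_range; lia.
case: ifP => [_|/negbT iT].
  by apply: is_affineB (is_affine_cst _) _; apply: is_affine_Y; lia.
by apply: is_affineB; apply: is_affine_Y; lia.
Qed.

Lemma face_form_diag i : (i < T + T)%N -> face_form i (face_point i) != 0.
Proof.
move=> hi; rewrite /face_form /face_point; case: ifP => [_|/negbT i0].
  exact: oner_neq0.
case: ifP => hiT.
  rewrite X_point_of ?eqxx; last by apply: bump_range; lia.
  by rewrite addrAC subrr add0r oppr_eq0 gt_eqF.
case: ifP => [/eqP ->|/negbT iT].
  have -> : ((T + T).+1 - T = T.+1)%N by lia.
  by rewrite switch_point_last ?subr0 ?oner_neq0 //; lia.
have [a [b [hb hY]]] := Y_switch_point ((T + T).+1 - i).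
rewrite !hY; try lia.
have -> : ((T + T).+1 - i <= ((T + T).+1 - i).-1)%N = false by lia.
by rewrite leqnn /= mulr0 mulr1 addr0 opprD addrA subrr add0r oppr_eq0.
Qed.

Lemma face_form_lower i j : (j < i < T + T)%N -> face_form i (face_point j) = 0.
Proof.
move=> /andP[hji hi]; rewrite /face_form; case: ifP => [/eqP hi0|_]; first lia.
case: ifP => hiT.
  rewrite face_point_X_on ?subrr //; [lia | apply: bump_range; lia |].
  by rewrite (inj_eq (can_inj (bumpK t))) neq_ltn hji orbT.
case: ifP => [/eqP iT|/negbT iT].
  by rewrite face_point_Y_on ?subrr //; lia.
case: (ltnP j T) => hjT; first by rewrite !face_point_Y_on ?subrr //; lia.
rewrite face_point_switch //.
have [a [b [hb hY]]] := Y_switch_point ((T + T).+1 - j).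
rewrite !hY; try lia.
have -> : ((T + T).+1 - j <= ((T + T).+1 - i).-1)%N = false by lia.
have -> : ((T + T).+1 - j <= (T + T).+1 - i)%N = false by lia.
by rewrite subrr.
Qed.

Lemma face_point_indep : aff_indep (fun i : 'I_(T + T) => face_point i).
Proof.
apply: (aff_indep_triangular (f := face_form)).
- exact: face_form_affine.
- exact: face_form_diag.
- exact: face_form_lower.
Qed.

Theorem ramp_ineq_facet :
  facet_defining (conv (inP L l Cb Cl V Vb)) (fun p : point R T => X p t) rhs.
Proof.
apply: (facet_criterion (F := face_point) (p0 := dip T Cb V t)).
- exact: ramp_rhs_affine.
- by move=> p hp; apply: (ramp_ineq_valid (ltW hV) hsmax gap_short ht hp).
- exact: face_point_tight.
- exact: face_point_indep.
- by apply: dip_inP => //; [apply: ltW | move: hClVb hVbV; lra].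
- rewrite /ramp_rhs (ramp_sum_const (a := 1)) => [|u hu]; last by rewrite Y_point_of //; lia.
  rewrite X_point_of ?Y_point_of ?eqxx; try lia.
  by rewrite mulr1 subr0 -subr_eq0 addrAC subrr add0r oppr_eq0 gt_eqF.
Qed.

End Facet.

Lemma natr_mul_le_of_floor (R : realType) (n : nat) (a V : R) :
  0 < V -> (n%:Z <= Num.floor (a / V))%R -> n%:R * V <= a.
Proof. by move=> hV; rewrite real_floor_ge_int ?num_real // -pmulrn ler_pdivlMr. Qed.

Theorem proposition2 (R : realType) (T L l : nat) (Cb Cl V Vb : R)
  (alpha beta smax : nat) :
  (0 < T)%N -> (0 < L)%N -> (0 < l)%N ->
  Cb > Cl -> Cl > 0 -> V > 0 -> Vb + V <= Cb -> Cl < Vb -> Vb < Cl + V ->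
  (* (a) *)
  (L <= smax)%N -> (smax <= T - 2)%N ->
  (smax%:Z <= Num.floor ((Cb - Vb) / V))%R ->
  (* (b) *)
  (alpha < beta)%N -> (beta <= smax)%N ->
  (* (c) *)
  (beta = alpha.+1 \/ (smax <= L + alpha)%N) ->
  (forall t, (smax + 2 <= t <= T)%N ->
     facet_defining (conv (inP L l Cb Cl V Vb))
       (fun p : point R T => X p t)
       (fun p : point R T => Cb * Y p t -
          \sum_(0 <= s < smax.+1 | (s <= alpha)%N || (beta <= s)%N)
             (Cb - Vb - s%:R * V) * (Y p (t - s) - Y p (t - s - 1)))) /\
  (forall t, (1 <= t <= T - smax - 1)%N ->
     facet_defining (conv (inP L l Cb Cl V Vb))
       (fun p : point R T => X p t)
       (fun p : point R T => Cb * Y p t -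
          \sum_(0 <= s < smax.+1 | (s <= alpha)%N || (beta <= s)%N)
             (Cb - Vb - s%:R * V) * (Y p (t + s) - Y p (t + s + 1)))).
Proof.
move=> _ _ _ _ hCl hV hVbV hClVb _ _ _ hfloor hab hbs hc.
pose S s := (s <= alpha)%N || (beta <= s)%N.
have gap_short k : (k <= smax)%N -> ~~ S k -> (smax < k + L)%N.
  by move=> hk /norP[]; rewrite -!ltnNge => ha hb; case: hc; lia.
have hsmax := natr_mul_le_of_floor hV hfloor.
have facet t (ht : (smax + 2 <= t <= T)%N) :=
  ramp_ineq_facet l hV (ltW hCl) (ltW hClVb) hVbV hsmax gap_short ht.
split=> t ht; first exact: facet.
apply: facet_defining_rev (facet (T.+1 - t)%N _) => [p|p|p|]; last lia.
- by apply: conv_rev => q; apply: inP_rev.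
- by rewrite X_rev ?subKn //; lia.
rewrite /ramp_rhs Y_rev ?subKn; try lia; congr (_ - _).
rewrite big_nat_cond [RHS]big_nat_cond; apply: eq_bigr => s /andP[/andP[_ hs] _].
by rewrite !Y_rev; try lia; congr (_ * (Y p _ - Y p _)); lia.
Qed.
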